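(* Under the hypotheses of Theorem 4 with $k>1$ — i.e. $J\subseteq A_n$ a cyclic code with parity-check polynomial $\prod_{i=1}^t h_i$, $c(x)=\prod_{j=1}^k h_{i_j}(x)$ with every $h_{i_j}$ of degree $m_{i_j}$ and order $n_{i_j}\ne q^{m_{i_j}}-1$, $C$ the set of elements of $J$ with minimal polynomial $c$, $n_c=\mathrm{lcm}(n_{i_1},\dots,n_{i_k})$, $d_c=\gcd(q-1,n_c)$, $r_c=n_c/d_c$, $b_c=(q-1)/d_c$, $s_c$ the number of cycles in $C$ and $R_c$ the number of proportionality classes in $C$ — all vectors of $C$ have the same Hamming weight provided at least one of the following holds: (1) $s_c=b_c$; (2) $r_c=R_c$; (3) $\gcd(s_c,R_c)=1$.
   Context: Let $q>2$ be a prime power, $n\ge1$ with $\gcd(n,q)=1$, $A_n=GF(q)[x]/(x^n-1)$ with elements identified with coefficient vectors of polynomials of degree $<n$; Hamming weight = number of nonzero coefficients. $h_i$ are distinct monic irreducible polynomials; the order of $f$ with $f(0)\neq0$ is the least $e\ge1$ with $f\mid x^e-1$. Proportionality class of nonzero $z$: $\{\alpha z:\alpha\in GF(q)^*\}$; cycle: $\{x^iz:i\ge0\}$; minimal polynomial of $z$: $(x^n-1)/\gcd(z(x),x^n-1)$. *)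

From HB Require Import structures.
From mathcomp Require Import all_boot all_order all_algebra all_field.
Set Implicit Arguments. Unset Strict Implicit. Unset Printing Implicit Defensive.
Import GRing.Theory.
Local Open Scope ring_scope.

Definition xn1 (F : finFieldType) (n : nat) : {poly F} := 'X^n - 1.

(* An element of A_n = GF(q)[x]/(x^n-1) is identified with its coefficient
   vector (row vector of length n); vpoly gives the polynomial of degree < n. *)
Definition vpoly (F : finFieldType) (n : nat) (v : 'rV[F]_n) : {poly F} :=
  \sum_(i < n) v ord0 i *: 'X^i.
Definition pvec (F : finFieldType) (n : nat) (p : {poly F}) : 'rV[F]_n :=
  \row_(i < n) p`_i.

Definition hweight (F : finFieldType) (n : nat) (v : 'rV[F]_n) : nat :=
  #|[set i : 'I_n | v ord0 i != 0]|.

(* The cyclic code with parity-check polynomial h: the ideal generated by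
   g = (x^n-1)/h. *)
Definition cyc_code (F : finFieldType) (n : nat) (h : {poly F}) : {set 'rV[F]_n} :=
  [set v : 'rV[F]_n | (xn1 F n %/ h) %| vpoly v].

Definition min_poly (F : finFieldType) (n : nat) (v : 'rV[F]_n) : {poly F} :=
  let g := gcdp (vpoly v) (xn1 F n) in xn1 F n %/ ((lead_coef g)^-1 *: g).

Definition elts_minpoly (F : finFieldType) (n : nat) (h c : {poly F}) : {set 'rV[F]_n} :=
  [set v in cyc_code n h | min_poly v == c].

Definition prop_class (F : finFieldType) (n : nat) (z : 'rV[F]_n) : {set 'rV[F]_n} :=
  [set a *: z | a in [set a : F | a != 0]].

(* cycle {x^i z : i >= 0} (x^n z = z, so i < n suffices) *)
Definition cycle_of (F : finFieldType) (n : nat) (z : 'rV[F]_n) : {set 'rV[F]_n} :=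
  [set pvec n (('X^i * vpoly z) %% xn1 F n) | i : 'I_n].

Definition num_cycles (F : finFieldType) (n : nat) (C : {set 'rV[F]_n}) : nat :=
  #|[set cycle_of z | z in C]|.
Definition num_prop_classes (F : finFieldType) (n : nat) (C : {set 'rV[F]_n}) : nat :=
  #|[set prop_class z | z in C]|.

Definition poly_order (F : finFieldType) (f : {poly F}) (e : nat) : Prop :=
  [/\ (0 < e)%N, f %| 'X^e - 1 &
      forall e' : nat, (0 < e')%N -> (e' < e)%N -> ~~ (f %| 'X^e' - 1)].

From HB Require Import structures.
From mathcomp Require Import all_boot all_order all_algebra all_field.
From mathcomp Require Import ring.
Set Implicit Arguments. Unset Strict Implicit. Unset Printing Implicit Defensive.
Import GRing.Theory.
Local Open Scope ring_scope.

(* The maps z |-> a x^i z (a != 0) preserve both C and the Hamming weight.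
   As a product of distinct monic irreducibles, c has order n_c, the lcm of
   the orders of its factors.  Counting C by cycles (each of size n_c) and by
   proportionality classes (each of size q - 1) gives s_c n_c = R_c (q - 1),
   and each of the three conditions turns this into R_c = r_c = n_c / d_c.
   Let e be the projective order of c: the least e > 0 such that x^e is
   congruent to a nonzero constant modulo c.  The elements a x^i u, a != 0,
   i < e, are pairwise distinct, and e >= n_c / d_c because the constant has
   multiplicative order n_c / e, a divisor of gcd(q - 1, n_c).  Hence
   |C| = R_c (q - 1) <= (q - 1) e, so C is the single orbit of any of its
   elements u, and all its elements have the weight of u. *)

Lemma dvdp_Xn_sub1 (R : idomainType) (m l : nat) :
  (m %| l)%N -> ('X^m - 1 : {poly R}) %| 'X^l - 1.
Proof. by case/dvdnP=> a ->; rewrite mulnC exprM (subrX1 ('X^m)) dvdp_mulIl. Qed.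

Lemma dvdp_Xn_modn (R : idomainType) (d : {poly R}) (N m : nat) :
  d %| 'X^N - 1 -> d %| 'X^m - 'X^(m %% N).
Proof.
move=> dN; rewrite {1}(divn_eq m N) exprD -{2}['X^(m %% N)]mul1r -mulrBl.
by rewrite dvdp_mulr // (dvdp_trans dN) // dvdp_Xn_sub1 // dvdn_mull.
Qed.

Lemma coprimep_Xn (R : idomainType) (d : {poly R}) (N i : nat) :
  (0 < N)%N -> d %| 'X^N - 1 -> coprimep d 'X^i.
Proof.
move=> N0 dN; apply/coprimep_expr/(coprimep_dvdr dN).
by rewrite coprimepX /root !hornerE expr0n eqn0Ngt N0 sub0r oppr_eq0 oner_eq0.
Qed.

Lemma poly_order_dvdn (F : finFieldType) (f : {poly F}) (o e : nat) :
  poly_order f o -> f %| 'X^e - 1 -> (o %| e)%N.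
Proof.
case=> o0 fo omin fe; have [/eqP//|r0] := posnP (e %% o)%N.
have : f %| 'X^(e %% o) - 1.
  have -> : 'X^(e %% o) - 1 = ('X^e - 1) - ('X^e - 'X^(e %% o)) :> {poly F}.
    by rewrite opprB [in RHS]addrC [in RHS]addrA subrK.
  by rewrite dvdp_sub // dvdp_Xn_modn.
by rewrite (negbTE (omin _ r0 (ltn_pmod e o0))).
Qed.

Lemma coprimep_monic_irr (R : idomainType) (p q : {poly R}) :
  irreducible_poly p -> irreducible_poly q -> p \is monic -> q \is monic ->
  p != q -> coprimep p q.
Proof.
move=> ip [_ iq] mp mq; rewrite irreducible_poly_coprime //; apply: contra => pq.
by rewrite -eqp_monic // iq // gtn_eqF // ip.1.
Qed.

Lemma prod_coprime_dvdp (R : idomainType) (I : eqType) (s : seq I)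
    (f : I -> {poly R}) (Q : {poly R}) :
  uniq s -> (forall i, i \in s -> f i %| Q) ->
  {in s &, forall i j, i != j -> coprimep (f i) (f j)} -> \prod_(i <- s) f i %| Q.
Proof.
elim: s => [|x s IH] /=; first by rewrite big_nil dvd1p.
case/andP=> xs us fQ cop; rewrite big_cons Gauss_dvdp.
  rewrite fQ ?mem_head //= IH // => [i iS|i j iS jS].
    by rewrite fQ // inE iS orbT.
  by apply: cop; rewrite inE ?iS ?jS orbT.
rewrite big_seq; apply: (big_ind (coprimep (f x))) => [|a b|i iS].
- exact: coprimep1.
- by rewrite coprimepMr => ->.
- by apply: cop; rewrite ?inE ?eqxx ?iS ?orbT //; apply: contraNneq xs => ->.
Qed.

Lemma poly_order_prod (F : finFieldType) (I : finType) (f : I -> {poly F})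
    (o : I -> nat) :
  (forall i j, i != j -> coprimep (f i) (f j)) ->
  (forall i, poly_order (f i) (o i)) ->
  poly_order (\prod_i f i) (\big[lcmn/1%N]_i o i).
Proof.
move=> cop ford; set L := (\big[lcmn/1%N]_i o i)%N.
have fdvd i : f i %| \prod_j f j by rewrite (bigD1 i) //= dvdp_mulIl.
split=> [|| e e0 eL].
- apply: (big_ind (fun m => 0 < m)%N) => // [a b a0 b0|i _].
    by rewrite lcmn_gt0 a0.
  by case: (ford i).
- apply: prod_coprime_dvdp (index_enum_uniq _) _ (in2W cop) => i _.
  have [_ fo _] := ford i.
  by apply: dvdp_trans fo (dvdp_Xn_sub1 _ (biglcmn_sup i _ _)).
- apply/negP=> fe; suff: (L %| e)%N by move/(dvdn_leq e0); rewrite leqNgt eL.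
  apply/dvdn_biglcmP=> i _; apply: poly_order_dvdn (ford i) _.
  exact: dvdp_trans (fdvd i) fe.
Qed.

Lemma dvdp_Xn_subXn (F : finFieldType) (f : {poly F}) (N i j : nat) :
  poly_order f N -> (f %| 'X^i - 'X^j) = (i == j %[mod N]).
Proof.
wlog ij : i j / (j <= i)%N.
  move=> W fN; case: (leqP j i) => [ji|/ltnW ji]; first exact: W.
  by rewrite -dvdpNr opprB W // eq_sym.
move=> fN; have [N0 fo _] := fN.
rewrite -(subnK ij) exprD -{2}['X^j]mul1r -mulrBl Gauss_dvdpl; last first.
  exact: coprimep_Xn N0 fo.
rewrite subnK // eqn_mod_dvd //; apply/idP/idP => [/(poly_order_dvdn fN)//|].
by move/dvdp_Xn_sub1/(dvdp_trans fo).
Qed.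

Lemma modp_eq_dvdp (R : fieldType) (d p q : {poly R}) :
  (p %% d == q %% d) = (d %| p - q).
Proof. by rewrite -subr_eq0 -modpN -modpD (sameP eqP (modp_eq0P _ _)). Qed.

Section CoefficientVectors.
Variables (F : finFieldType) (n : nat).
Implicit Types (v : 'rV[F]_n) (p : {poly F}).

Lemma vpolyE v : vpoly v = rVpoly v.
Proof.
apply/polyP=> j; rewrite coef_rVpoly /vpoly coef_sum.
case: insubP => [i _ <-|jn].
  rewrite (bigD1 i) //= coefZ coefXn eqxx mulr1 big1 ?addr0 // => k ki.
  by rewrite coefZ coefXn eq_sym (inj_eq val_inj) (negbTE ki) mulr0.
rewrite big1 // => k _; rewrite coefZ coefXn; case: eqP => [jk|]; last by rewrite mulr0.
by move: jn; rewrite jk ltn_ord.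
Qed.

Lemma size_vpoly v : (size (vpoly v) <= n)%N.
Proof. by rewrite vpolyE size_poly. Qed.

Lemma vpolyK v : pvec n (vpoly v) = v.
Proof. by rewrite vpolyE; apply: rVpolyK. Qed.

Lemma pvecK p : (size p <= n)%N -> vpoly (pvec n p) = p.
Proof. by rewrite vpolyE; apply: poly_rV_K. Qed.

Lemma vpolyZ a v : vpoly (a *: v) = a *: vpoly v.
Proof. by rewrite !vpolyE linearZ. Qed.

Lemma vpoly0 : vpoly (0 : 'rV[F]_n) = 0.
Proof. by rewrite vpolyE linear0. Qed.

End CoefficientVectors.

Section Shifts.
Variables (F : finFieldType) (n : nat).
Hypothesis n_gt0 : (0 < n)%N.
Local Notation M := (xn1 F n).
Implicit Types (v z : 'rV[F]_n) (p : {poly F}).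

Lemma size_xn1 : size M = n.+1.
Proof. by rewrite /xn1 -polyC1 size_XnsubC. Qed.

Lemma xn1_neq0 : M != 0.
Proof. by rewrite -size_poly_eq0 size_xn1. Qed.

Lemma xn1_monic : M \is monic.
Proof. by rewrite /xn1 -polyC1 monicXnsubC. Qed.

Lemma size_modxn1 p : (size (p %% M)%R <= n)%N.
Proof. by rewrite -ltnS -size_xn1 ltn_modp xn1_neq0. Qed.

Definition xmul (i : nat) z : 'rV[F]_n := pvec n (('X^i * vpoly z) %% M).

Lemma vpoly_xmul i z : vpoly (xmul i z) = ('X^i * vpoly z) %% M.
Proof. by rewrite pvecK // size_modxn1. Qed.

Lemma xmul0 z : xmul 0 z = z.
Proof. by rewrite /xmul mul1r modp_small ?vpolyK // size_xn1 ltnS size_vpoly. Qed.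

Lemma xmulD i j z : xmul i (xmul j z) = xmul (i + j) z.
Proof. by rewrite /xmul vpoly_xmul modp_mul mulrA -exprD. Qed.

Lemma xmul_modn i z : xmul (i %% n) z = xmul i z.
Proof.
rewrite /xmul; congr pvec; apply/eqP.
by rewrite modp_eq_dvdp -mulrBl dvdp_mulr // -opprB dvdpNr dvdp_Xn_modn.
Qed.

Lemma Xn_modxn1 m : 'X^m %% M = 'X^(m %% n).
Proof.
rewrite -[RHS](@modp_small _ _ M); last by rewrite size_xn1 size_polyXn ltnS ltn_pmod.
by apply/eqP; rewrite modp_eq_dvdp dvdp_Xn_modn.
Qed.

(* Multiplication by x^i rotates coordinates: index k moves to k + i mod n. *)
Definition rot (i : nat) (k : 'I_n) : 'I_n := Ordinal (ltn_pmod (k + i) n_gt0).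

Lemma rot_inj i : injective (rot i).
Proof.
move=> a b /(congr1 val) /= /eqP; rewrite eqn_modDr !modn_small //.
by move/eqP/val_inj.
Qed.

Lemma coef_xmul i z k : xmul i z 0 (rot i k) = z 0 k.
Proof.
rewrite mxE /vpoly mulr_sumr (big_morph _ (modpD M) (mod0p M)) coef_sum (bigD1 k) //=.
rewrite big1 ?addr0 => [|j jk];
  rewrite -scalerAr -exprD (addnC i) modpZl Xn_modxn1 coefZ coefXn.
  by rewrite eqxx mulr1.
by rewrite eqn_modDr !modn_small // (inj_eq val_inj) eq_sym (negbTE jk) mulr0.
Qed.

Lemma hweight_xmul i z : hweight (xmul i z) = hweight z.
Proof.
rewrite /hweight -(card_preimset _ (@rot_inj i)); apply: eq_card => k.
by rewrite !inE coef_xmul.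
Qed.

Lemma hweightZ a z : a != 0 -> hweight (a *: z) = hweight z.
Proof. by move=> a0; apply: eq_card => k; rewrite !inE mxE mulf_eq0 negb_or a0. Qed.

End Shifts.

Section MinimalPolynomial.
Variables (F : finFieldType) (n : nat).
Hypothesis n_gt0 : (0 < n)%N.
Local Notation M := (xn1 F n).
Implicit Types (z w : 'rV[F]_n) (Q : {poly F}).

Lemma annihilatorE z Q : (M %| Q * vpoly z) = (min_poly z %| Q).
Proof.
rewrite /min_poly; set g := gcdp (vpoly z) M.
have g0 : g != 0 by rewrite gcdp_eq0 (negbTE (xn1_neq0 F n_gt0)) andbF.
rewrite divpZr ?invr_eq0 ?lead_coef_eq0 // invrK dvdpZl ?lead_coef_eq0 //.
have eM : M = M %/ g * g by rewrite divpK // dvdp_gcdr.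
have ez : vpoly z = vpoly z %/ g * g by rewrite divpK // dvdp_gcdl.
rewrite {1}eM {1}ez mulrA dvdp_mul2r // Gauss_dvdpl // coprimep_sym coprimep_div_gcd //.
by rewrite xn1_neq0 // orbT.
Qed.

Lemma min_poly_monic z : min_poly z \is monic.
Proof.
rewrite /min_poly; set g := gcdp (vpoly z) M.
have g0 : g != 0 by rewrite gcdp_eq0 (negbTE (xn1_neq0 F n_gt0)) andbF.
have gM : (lead_coef g)^-1 *: g %| M.
  by rewrite dvdpZl ?invr_eq0 ?lead_coef_eq0 ?dvdp_gcdr.
have := xn1_monic F n_gt0; rewrite -{1}(divpK gM) monicMr //.
by apply/monicP; rewrite lead_coefZ mulVf ?lead_coef_eq0.
Qed.

Lemma min_poly_dvd_xn1 z : min_poly z %| M.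
Proof. by rewrite -annihilatorE dvdp_mulr. Qed.

Lemma eq_min_poly z w :
  (forall Q, (M %| Q * vpoly z) = (M %| Q * vpoly w)) -> min_poly z = min_poly w.
Proof.
move=> eqM; apply/eqP; rewrite -eqp_monic ?min_poly_monic //.
apply/andP; split; rewrite -annihilatorE; [rewrite eqM | rewrite -eqM];
  by rewrite annihilatorE.
Qed.

Lemma vpoly_scaled_xmul a i z :
  vpoly (a *: xmul i z) = ((a *: 'X^i) * vpoly z) %% M.
Proof. by rewrite vpolyZ vpoly_xmul // -modpZl scalerAl. Qed.

Lemma min_poly_scaled_xmul a i z : a != 0 -> min_poly (a *: xmul i z) = min_poly z.
Proof.
move=> a0; apply: eq_min_poly => Q.
rewrite vpoly_scaled_xmul (dvdp_mod _ (dvdpp M)) modp_mul -(dvdp_mod _ (dvdpp M)).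
rewrite mulrA !annihilatorE -scalerAr dvdpZr // Gauss_dvdpl //.
exact: coprimep_Xn n_gt0 (min_poly_dvd_xn1 z).
Qed.

Lemma scaled_xmul_eq a b i j z :
  (a *: xmul i z == b *: xmul j z) = (min_poly z %| a *: 'X^i - b *: 'X^j).
Proof.
rewrite -(inj_eq (can_inj (@vpolyK F n))) !vpoly_scaled_xmul modp_eq_dvdp.
by rewrite -mulrBl annihilatorE.
Qed.

End MinimalPolynomial.

Lemma card_by_classes (T : finType) (A : {set T}) (f : T -> {set T}) (k : nat) :
  (forall z, z \in A -> z \in f z) ->
  (forall z w, z \in A -> w \in f z -> w \in A /\ f w = f z) ->
  (forall z, z \in A -> #|f z| = k) -> #|A| = (#|f @: A| * k)%N.
Proof.
move=> self stable size_k.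
rewrite -sum1_card (partition_big_imset f) /= -sum_nat_const.
apply: eq_bigr => _ /imsetP[z zA ->].
rewrite -(size_k z zA) -sum1_card; apply: eq_bigl => w.
apply/andP/idP => [[wA /eqP <-]|wz]; first exact: self.
by have [-> ->] := stable z w zA wz.
Qed.

Section Classes.
Variables (F : finFieldType) (n : nat).
Hypothesis n_gt0 : (0 < n)%N.
Implicit Types (z w : 'rV[F]_n).

Lemma xmul_eq i j z : (xmul i z == xmul j z) = (min_poly z %| 'X^i - 'X^j).
Proof. by have := scaled_xmul_eq n_gt0 1 1 i j z; rewrite !scale1r. Qed.

Lemma cycle_ofE z : cycle_of z = [set xmul i z | i : 'I_n].
Proof. by []. Qed.

Lemma mem_cycle j z : xmul j z \in cycle_of z.
Proof.
rewrite cycle_ofE; apply/imsetP.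
by exists (Ordinal (ltn_pmod j n_gt0)); rewrite ?xmul_modn.
Qed.

Lemma cycle_self z : z \in cycle_of z.
Proof. by rewrite -{1}(xmul0 n_gt0 z) mem_cycle. Qed.

Lemma cycle_sub z w : w \in cycle_of z -> cycle_of w \subset cycle_of z.
Proof.
rewrite cycle_ofE => /imsetP[i _ ->]; apply/subsetP=> x.
by rewrite cycle_ofE => /imsetP[j _ ->]; rewrite xmulD // mem_cycle.
Qed.

Lemma cycle_of_mem z w : w \in cycle_of z -> cycle_of w = cycle_of z.
Proof.
move=> wz; apply/eqP; rewrite eqEsubset cycle_sub //=; apply: cycle_sub.
move: wz; rewrite cycle_ofE => /imsetP[i _ ->].
have zn : xmul (n - i + i) z = z.
  by rewrite subnK ?(ltnW (ltn_ord i)) // -xmul_modn // modnn xmul0.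
by rewrite -{1}zn -xmulD // mem_cycle.
Qed.

Lemma card_cycle z N : poly_order (min_poly z) N -> #|cycle_of z| = N.
Proof.
move=> zN; have N0 : (0 < N)%N by case: zN.
have -> : cycle_of z = [set xmul i z | i : 'I_N].
  apply/eqP; rewrite eqEsubset; apply/andP; split; apply/subsetP=> _ /imsetP[i _ ->].
    apply/imsetP; exists (Ordinal (ltn_pmod i N0)) => //.
    by apply/eqP; rewrite xmul_eq (dvdp_Xn_subXn _ _ zN) modn_mod.
  exact: mem_cycle.
rewrite card_imset ?card_ord // => i j /eqP; rewrite xmul_eq (dvdp_Xn_subXn _ _ zN).
by rewrite !modn_small // => /eqP/val_inj.
Qed.

Lemma prop_self z : z \in prop_class z.
Proof. by apply/imsetP; exists 1; rewrite ?inE ?oner_eq0 ?scale1r. Qed.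

Lemma prop_class_mem z w : w \in prop_class z -> prop_class w = prop_class z.
Proof.
case/imsetP=> b; rewrite inE => b0 ->; apply/eqP; rewrite eqEsubset.
apply/andP; split; apply/subsetP=> x /imsetP[a]; rewrite inE => a0 ->.
  by apply/imsetP; exists (a * b); rewrite ?inE ?mulf_neq0 ?scalerA.
by apply/imsetP; exists (a / b); rewrite ?inE ?mulf_neq0 ?invr_eq0 // scalerA divfK.
Qed.

Lemma card_prop_class z : z != 0 -> #|prop_class z| = (#|F| - 1)%N.
Proof.
move=> z0; rewrite card_in_imset.
  have -> : [set a : F | a != 0] = [set~ 0] by apply/setP=> a; rewrite !inE.
  by rewrite cardsC1 subn1.
move=> a b _ _ /eqP; rewrite -subr_eq0 -scalerBl scaler_eq0 (negbTE z0) orbF.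
by rewrite subr_eq0 => /eqP.
Qed.

End Classes.

Section ScalarPowers.
Variables (F : finFieldType) (c : {poly F}) (N : nat).
Hypothesis c_order : poly_order c N.
Hypothesis c_size : (1 < size c)%N.

Lemma order_gt0 : (0 < N)%N. Proof. by case: c_order. Qed.

Lemma dvdp_polyC_eq a b : c %| a%:P - b%:P -> a = b.
Proof.
move=> cab; apply/eqP; rewrite -subr_eq0; apply: contraLR cab => ab.
by rewrite -polyCB gtNdvdp ?polyC_eq0 // size_polyC ab.
Qed.

Definition scalar_power (e : nat) : bool :=
  [exists a : F, (a != 0) && (c %| 'X^e - a%:P)].

Lemma scalar_power_order : scalar_power N.
Proof. by apply/existsP; exists 1; rewrite oner_eq0 polyC1; case: c_order. Qed.

Lemma scalar_power_subn i j :
  scalar_power (i + j) -> scalar_power i -> scalar_power j.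
Proof.
case/existsP=> a /andP[a0 ca] /existsP[b /andP[b0 cb]].
apply/existsP; exists (a / b); rewrite mulf_neq0 ?invr_eq0 //= -(dvdpZr _ _ b0).
have -> : b *: ('X^j - (a / b)%:P) = ('X^(i + j) - a%:P) - 'X^j * ('X^i - b%:P).
  rewrite scalerBr -!mul_polyC -polyCM (mulrC b) divfK // exprD; ring.
by apply: dvdp_sub; rewrite // dvdp_mull.
Qed.

Lemma proj_order_exists : exists e, (0 < e)%N && scalar_power e.
Proof. by exists N; rewrite order_gt0 scalar_power_order. Qed.

Definition proj_order : nat := ex_minn proj_order_exists.

Lemma proj_orderP : (0 < proj_order)%N /\ scalar_power proj_order.
Proof. by rewrite /proj_order; case: ex_minnP => e /andP[]. Qed.

Lemma proj_order_min e : (0 < e)%N -> scalar_power e -> (proj_order <= e)%N.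
Proof.
by move=> e_gt0 se; rewrite /proj_order; case: ex_minnP => m _; apply; rewrite e_gt0.
Qed.

Lemma proj_order_dvdn e : scalar_power e -> (proj_order %| e)%N.
Proof.
elim/ltn_ind: e => e IH se; have [e0_gt0 se0] := proj_orderP.
have [->|e_gt0] := posnP e; first exact: dvdn0.
have le := proj_order_min e_gt0 se.
rewrite -(subnKC le) dvdn_addr // IH ?ltn_subrL ?e0_gt0 //.
by apply: scalar_power_subn se0; rewrite subnKC.
Qed.

Lemma scaled_Xn_inj a b i j : a != 0 -> b != 0 ->
    (i < proj_order)%N -> (j < proj_order)%N ->
  c %| a *: 'X^i - b *: 'X^j -> a = b /\ i = j.
Proof.
wlog ij : a b i j / (i <= j)%N.
  move=> W a0 b0 ie je cab; have [l|/ltnW l] := leqP i j; first exact: W.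
  have [|-> ->] // := W b a j i l b0 a0 je ie; by rewrite -dvdpNr opprB.
move=> a0 b0 _ je; set d := (j - i)%N.
have -> : a *: 'X^i - b *: 'X^j = (a%:P - b *: 'X^d) * 'X^i.
  by rewrite -(subnK ij) -/d exprD mulrBl mul_polyC scalerAl.
have [_ cN _] := c_order.
rewrite Gauss_dvdpl => [cd|]; last exact: coprimep_Xn order_gt0 cN.
have [d0|d_gt0] := posnP d.
  split; last by apply/eqP; rewrite eqn_leq ij -subn_eq0 -/d d0.
  by apply: dvdp_polyC_eq; move: cd; rewrite d0 expr0 alg_polyC.
have : scalar_power d.
  apply/existsP; exists (a / b); rewrite mulf_neq0 ?invr_eq0 //= -(dvdpZr _ _ b0).
  by rewrite scalerBr scale_polyC (mulrC b) divfK // -dvdpNr opprB.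
move/(proj_order_min d_gt0); rewrite leqNgt => /negP[].
exact: leq_ltn_trans (leq_subr i j) je.
Qed.

(* If x^e is congruent to a modulo c (e the projective order), then a has
   multiplicative order N / e; hence N / e divides gcd(q - 1, N). *)
Lemma proj_order_bound : (N <= proj_order * gcdn (#|F| - 1) N)%N.
Proof.
have [e_gt0 /existsP[a /andP[a0 ca]]] := proj_orderP.
have eN : (proj_order %| N)%N := proj_order_dvdn scalar_power_order.
set e := proj_order in e_gt0 ca eN *; set m := (N %/ e)%N.
have cXk k : c %| 'X^(k * e) - (a ^+ k)%:P.
  by rewrite mulnC exprM polyC_exp subrXX dvdp_mulr.
have a_order k : a ^+ k = 1 -> (m %| k)%N.
  move=> ak; rewrite -(dvdn_pmul2r e_gt0) divnK //.
  by apply: poly_order_dvdn c_order _; move: (cXk k); rewrite ak polyC1.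
have aq : a ^+ (#|F| - 1) = 1.
  apply: (mulIf a0); rewrite mul1r -exprSr subn1 prednK ?expf_card //.
  by apply/card_gt0P; exists 0.
rewrite -{1}(divnK eN) mulnC leq_mul2l dvdn_leq ?orbT // ?gcdn_gt0 ?order_gt0 ?orbT //.
by rewrite dvdn_gcd a_order // -{2}(divnK eN) dvdn_mulr.
Qed.

End ScalarPowers.

Section CodeElements.
Variables (F : finFieldType) (n : nat) (H c : {poly F}) (N : nat).
Hypothesis n_gt0 : (0 < n)%N.
Hypothesis H_dvd : H %| xn1 F n.
Hypothesis c_order : poly_order c N.
Hypothesis c_size : (1 < size c)%N.
Local Notation C := (elts_minpoly n H c).
Local Notation e0 := (proj_order c_order).
Implicit Types (z : 'rV[F]_n).

Lemma min_poly_C z : z \in C -> min_poly z = c.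
Proof. by rewrite inE => /andP[_ /eqP]. Qed.

Lemma scaled_xmul_C a i z : z \in C -> a != 0 -> a *: xmul i z \in C.
Proof.
move=> zC a0; rewrite !inE min_poly_scaled_xmul // min_poly_C // eqxx andbT.
have gM : xn1 F n %/ H %| xn1 F n by rewrite -{2}(divpK H_dvd) dvdp_mulr.
move: zC; rewrite !inE vpoly_scaled_xmul // -dvdp_mod // => /andP[gz _].
by rewrite dvdp_mull.
Qed.

Lemma C_neq0 z : z \in C -> z != 0.
Proof.
move=> zC; apply: contraTneq c_size => z0.
have := annihilatorE n_gt0 z 1.
rewrite (min_poly_C zC) z0 vpoly0 mulr0 dvdp0 => /esym.
by rewrite dvdp1 => /eqP->.
Qed.

Lemma card_C_cycles : #|C| = (num_cycles C * N)%N.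
Proof.
apply: card_by_classes => [z _|z w zC wz|z zC]; first exact: cycle_self.
  split; last exact: cycle_of_mem.
  move: wz; rewrite cycle_ofE => /imsetP[i _ ->].
  by rewrite -[xmul _ _]scale1r scaled_xmul_C ?oner_eq0.
by rewrite (card_cycle n_gt0 (N := N)) // min_poly_C.
Qed.

Lemma card_C_prop_classes : #|C| = (num_prop_classes C * (#|F| - 1))%N.
Proof.
apply: card_by_classes => [z _|z w zC wz|z zC]; first exact: prop_self.
  split; last exact: prop_class_mem.
  case/imsetP: wz => a; rewrite inE => a0 ->.
  by rewrite -(xmul0 n_gt0 z) scaled_xmul_C.
by rewrite card_prop_class // C_neq0.
Qed.

Definition orbit z : {set 'rV[F]_n} :=
  [set p.1 *: xmul p.2 z | p : F * 'I_e0 in [set p : F * 'I_e0 | p.1 != 0]].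

Lemma card_orbit z : z \in C -> #|orbit z| = ((#|F| - 1) * e0)%N.
Proof.
move=> zC; rewrite card_in_imset => [|[a i] [b j]].
  have -> : [set p : F * 'I_e0 | p.1 != 0] = setX [set~ 0] [set: 'I_e0].
    by apply/setP=> -[a i]; rewrite !inE andbT.
  by rewrite cardsX cardsC1 cardsT card_ord subn1.
rewrite !inE /= => a0 b0 /eqP; rewrite scaled_xmul_eq // min_poly_C // => cab.
by have [-> /val_inj->] := scaled_Xn_inj c_size a0 b0 (ltn_ord i) (ltn_ord j) cab.
Qed.

Lemma orbit_sub z : z \in C -> orbit z \subset C.
Proof.
move=> zC; apply/subsetP=> x /imsetP[[a i]]; rewrite inE /= => a0 ->.
exact: scaled_xmul_C.
Qed.

Lemma hweight_C_small u v : (#|C| <= (#|F| - 1) * e0)%N ->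
  u \in C -> v \in C -> hweight u = hweight v.
Proof.
move=> Csmall uC; have <- : orbit u = C.
  by apply/eqP; rewrite eqEcard orbit_sub // card_orbit.
case/imsetP=> [[a i]]; rewrite inE /= => a0 ->.
by rewrite hweightZ // hweight_xmul.
Qed.

End CodeElements.

(* Counting C by cycles and by proportionality classes gives s N = R Q; each of
   the three conditions of the corollary then forces R = N / gcd(Q, N). *)
Lemma classes_eq_quotient (Q N s R : nat) : (0 < Q)%N -> (0 < N)%N ->
  (s * N = R * Q)%N ->
  [|| s == (Q %/ gcdn Q N)%N, (N %/ gcdn Q N)%N == R | coprime s R] ->
  R = (N %/ gcdn Q N)%N.
Proof.
move=> Q_gt0 N_gt0 sNRQ; set g := gcdn Q N.
case/or3P=> [/eqP sE|/eqP-> //|cop].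
  apply/eqP; rewrite -(eqn_pmul2r Q_gt0) -sNRQ sE.
  by rewrite !divn_mulAC ?dvdn_gcdl ?dvdn_gcdr // mulnC.
have s_gt0 : (0 < s)%N.
  rewrite lt0n; apply: contraTneq cop => s0; move: sNRQ; rewrite s0 mul0n.
  by move/esym/eqP; rewrite muln_eq0 (gtn_eqF Q_gt0) orbF => /eqP->.
have /dvdnP[m Qm] : (s %| Q)%N by rewrite -(Gauss_dvdr _ cop) -sNRQ dvdn_mulr.
have Nm : N = (R * m)%N.
  by apply/eqP; rewrite -(eqn_pmul2l s_gt0) sNRQ Qm mulnA mulnC.
have -> : g = m by rewrite /g Qm Nm -!(mulnC m) -muln_gcdr (eqP cop) muln1.
have m_gt0 : (0 < m)%N by move: Q_gt0; rewrite Qm muln_gt0 => /andP[].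
by rewrite Nm mulnK.
Qed.

Theorem corollary7 (F : finFieldType) (n t k : nat)
    (h : 'I_t -> {poly F}) (idx : 'I_k -> 'I_t) (ord : 'I_k -> nat) :
  (2 < #|F|)%N -> (0 < n)%N -> coprime n #|F| ->
  injective h -> (forall i, h i \is monic) -> (forall i, irreducible_poly (h i)) ->
  (\prod_i h i) %| xn1 F n ->
  (1 < k)%N -> injective idx ->
  (forall j, poly_order (h (idx j)) (ord j)) ->
  (forall j, ord j != (#|F| ^ (size (h (idx j))).-1 - 1)%N) ->
  let C := elts_minpoly n (\prod_i h i) (\prod_j h (idx j)) in
  let nc := \big[lcmn/1%N]_j ord j in
  let dc := gcdn (#|F| - 1) nc in
  let rc := (nc %/ dc)%N in
  let bc := ((#|F| - 1) %/ dc)%N in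
  let sc := num_cycles C in
  let Rc := num_prop_classes C in
  [|| sc == bc, rc == Rc | coprime sc Rc] ->
  forall u v, u \in C -> v \in C -> hweight u = hweight v.
Proof.
move=> q_gt2 n_gt0 _ h_inj h_monic h_irr H_dvd k_gt1 idx_inj h_order _
  C nc dc rc bc sc Rc conditions u v uC vC.
pose c := \prod_j h (idx j).
have c_order : poly_order c nc.
  apply: poly_order_prod h_order => i j ij; apply: coprimep_monic_irr => //.
  by apply: contra ij => /eqP/h_inj/idx_inj->.
have c_size : (1 < size c)%N.
  pose j0 : 'I_k := Ordinal (ltnW k_gt1).
  apply: leq_trans (h_irr (idx j0)).1 (dvdp_leq _ _).
    by rewrite monic_neq0 // monic_prod.
  by rewrite /c (bigD1 j0) //= dvdp_mulIl.
have q1_gt0 : (0 < #|F| - 1)%N by rewrite subn_gt0 ltnW.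
have Rc_eq : Rc = rc.
  apply: classes_eq_quotient q1_gt0 (order_gt0 c_order) _ conditions.
  rewrite -(card_C_cycles n_gt0 H_dvd c_order).
  exact: card_C_prop_classes n_gt0 H_dvd c_size.
(* |C| = R_c (q - 1) = r_c (q - 1) <= (q - 1) e: C is a single orbit. *)
apply: (hweight_C_small n_gt0 H_dvd (c_order := c_order) c_size) uC vC.
rewrite (card_C_prop_classes n_gt0 H_dvd c_size) -/Rc Rc_eq mulnC leq_mul2l.
by rewrite leq_divLR ?dvdn_gcdr // (proj_order_bound c_order) orbT.
Qed.
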